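(* Let $a>0$, $\alpha\in[0,1)$ and $f\in\mathcal C_a$. For every $x\in(x_\alpha^-,a)$ we have $\mathrm{Sh}_\alpha(f)(x)<f(x)$ if and only if $x\in(u_\alpha,a)$. Moreover, the point of abscissa $u_\alpha$ is the unique intersection point of the graphs of $\mathrm{Sh}_\alpha(f)$ and $f$ with abscissa in $(x_\alpha^-,a)$.
   Context: $\mathcal C_a$ is the set of $C^1$ functions $f:\mathbb R\to\mathbb R$ that are even, satisfy $f(s)=|s|$ for $|s|\ge a$ and are strictly convex on $[-a,a]$. For $f\in\mathcal C_a$: $F_\alpha(s)=f(s)-\alpha s$, $x_\alpha^+=(f')^{-1}(\alpha)\in[0,a)$ (inverse of $f':[-a,a]\to[-1,1]$); $F_\alpha$ decreases on $(-\infty,x_\alpha^+]$ and increases on $[x_\alpha^+,\infty)$. Let $F_\alpha^{-1}$ be the inverse of $F_\alpha|_{[x_\alpha^+,\infty)}$ and $\phi=F_\alpha^{-1}\circ F_\alpha$; $\phi$ is a decreasing bijection $(-\infty,x_\alpha^+]\to[x_\alpha^+,\infty)$ and $x_\alpha^-<x_\alpha^+$ is the unique point with $\phi(x_\alpha^-)=a$. Let $\delta_x=(1-\alpha)^{-1}F_\alpha(x)-\phi(x)$, $s_\alpha=x_\alpha^++\delta_{x_\alpha^+}$; $x\mapsto x+\delta_x$ is an increasing bijection $(-\infty,x_\alpha^+]\to(-\infty,s_\alpha]$ with inverse $\tau$. Define $\mathrm{Sh}_\alpha(f)(x)=\alpha x+F_\alpha(\tau(x))$ for $x\le s_\alpha$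 and $=x$ for $x>s_\alpha$. Finally $u_\alpha$ denotes the unique element of $(x_\alpha^-,s_\alpha)$ such that $\phi(\tau(u_\alpha))=u_\alpha$. *)

From Stdlib Require Import Reals Lra ClassicalEpsilon.
Open Scope R_scope.

Definition the_real (P : R -> Prop) : R := epsilon (inhabits 0) P.

Definition C1 (f : R -> R) : Prop :=
  exists f' : R -> R, (forall x, derivable_pt_lim f x (f' x)) /\ continuity f'.

Definition strictly_convex_on (f : R -> R) (lo hi : R) : Prop :=
  forall x y t, lo <= x -> x < y -> y <= hi -> 0 < t < 1 ->
    f (t * x + (1 - t) * y) < t * f x + (1 - t) * f y.

Definition Ca (a : R) (f : R -> R) : Prop :=
  C1 f /\ (forall s, f (- s) = f s) /\
  (forall s, a <= Rabs s -> f s = Rabs s) /\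
  strictly_convex_on f (- a) a.

Definition Falpha (f : R -> R) (alpha s : R) : R := f s - alpha * s.

Definition xplus (a : R) (f : R -> R) (alpha : R) : R :=
  the_real (fun x => - a <= x <= a /\ derivable_pt_lim f x alpha).

Definition Finv (a : R) (f : R -> R) (alpha y : R) : R :=
  the_real (fun z => xplus a f alpha <= z /\ Falpha f alpha z = y).

Definition phi (a : R) (f : R -> R) (alpha x : R) : R :=
  Finv a f alpha (Falpha f alpha x).

Definition xminus (a : R) (f : R -> R) (alpha : R) : R :=
  the_real (fun x => x < xplus a f alpha /\ phi a f alpha x = a).

Definition delta (a : R) (f : R -> R) (alpha x : R) : R :=
  Falpha f alpha x / (1 - alpha) - phi a f alpha x.

Definition salpha (a : R) (f : R -> R) (alpha : R) : R :=
  xplus a f alpha + delta a f alpha (xplus a f alpha).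

Definition tau (a : R) (f : R -> R) (alpha y : R) : R :=
  the_real (fun x => x <= xplus a f alpha /\ x + delta a f alpha x = y).

Definition Sh (a : R) (f : R -> R) (alpha x : R) : R :=
  if Rle_dec x (salpha a f alpha)
  then alpha * x + Falpha f alpha (tau a f alpha x)
  else x.

Definition ualpha (a : R) (f : R -> R) (alpha : R) : R :=
  the_real (fun u => xminus a f alpha < u < salpha a f alpha /\
                     phi a f alpha (tau a f alpha u) = u).

(* Put y = tau x and z = phi y, so that z >= x+, F z = F y and
   x = y + F y / (1 - alpha) - z; for x <= s_alpha this gives
   Sh x - f x = F z - F x.  As tau increases and phi decreases, x |-> phi (tau x)
   decreases, and u_alpha is its unique fixed point.  If x > u_alpha then
   z < u_alpha < x, and F increases on [x+, oo).  If x < u_alpha then z > x, and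
   F z > F x either because x >= x+, or because y < x <= x+ where F decreases
   (y < x amounts to z < f z, true since z < a).  Beyond s_alpha, Sh x = x < f x.
   Strict convexity makes f' strictly increasing, which yields all the
   monotonicity; tau and u_alpha exist by the intermediate value theorem, phi
   being continuous as a monotone map onto an interval. *)

From Stdlib Require Import Reals Lra ClassicalEpsilon.
Open Scope R_scope.

Lemma the_real_spec (P : R -> Prop) : (exists x, P x) -> P (the_real P).
Proof. exact (epsilon_spec (inhabits 0) P). Qed.

Lemma the_real_unique (P : R -> Prop) x : P x -> (forall y, P y -> y = x) -> the_real P = x.
Proof. intros Hx Hu. apply Hu, the_real_spec. now exists x. Qed.

Lemma IVT_between (g : R -> R) x y c : continuity g -> x <= y ->
  (g x <= c <= g y \/ g y <= c <= g x) -> exists z, x <= z <= y /\ g z = c.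
Proof.
  intros Hg Hxy Hc.
  destruct (IVT_cor (fun t => g t - c) x y) as [z [Hz Ez]]; [| exact Hxy | |].
  - apply continuity_minus; [exact Hg | now apply continuity_const].
  - destruct Hc; nra.
  - exists z. split; [exact Hz | lra].
Qed.

Lemma continuity_pt_eps_delta (g : R -> R) x :
  (forall eps, 0 < eps -> exists d, 0 < d /\
     forall y, Rabs (y - x) < d -> Rabs (g y - g x) < eps) ->
  continuity_pt g x.
Proof.
  intros H eps Heps. destruct (H eps Heps) as [d [Hd Hy]].
  exists d. split; [exact Hd|]. intros y [_ Hyx]. exact (Hy y Hyx).
Qed.

Lemma continuity_Rmin_l p : continuity (fun y => Rmin y p).
Proof.
  intro y0. apply continuity_pt_eps_delta. intros eps Heps.
  exists eps. split; [exact Heps|]. intros y Hy. apply Rabs_def2 in Hy.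
  apply Rabs_def1; unfold Rmin; destruct (Rle_dec y p), (Rle_dec y0 p); lra.
Qed.

Lemma continuity_nonincreasing_onto (h : R -> R) m :
  (forall y1 y2, y1 <= y2 -> h y2 <= h y1) ->
  (forall y, m <= h y) ->
  (forall z, m <= z -> exists y, h y = z) ->
  continuity h.
Proof.
  intros Hmono Hlow Honto y0. apply continuity_pt_eps_delta. intros eps Heps.
  destruct (Honto (h y0 + eps / 2)) as [y1 E1]; [pose proof (Hlow y0); lra|].
  assert (Hy1 : y1 < y0).
  { apply Rnot_le_lt. intro L. pose proof (Hmono _ _ L). lra. }
  assert (Hright : exists y2, y0 < y2 /\ h y0 - eps < h y2).
  { destruct (Rle_dec m (h y0 - eps / 2)) as [L|L].
    - destruct (Honto _ L) as [y2 E2]. exists y2. split; [|lra].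
      apply Rnot_le_lt. intro L'. pose proof (Hmono _ _ L'). lra.
    - exists (y0 + 1). pose proof (Hlow (y0 + 1)). split; lra. }
  destruct Hright as [y2 [Hy2 E2]].
  exists (Rmin (y0 - y1) (y2 - y0)). split; [apply Rmin_pos; lra|].
  intros y Hy. apply Rabs_def2 in Hy.
  pose proof (Rmin_l (y0 - y1) (y2 - y0)). pose proof (Rmin_r (y0 - y1) (y2 - y0)).
  apply Rabs_def1; destruct (Rle_dec y y0) as [L|L].
  all: pose proof (Hmono y1 y ltac:(lra)); pose proof (Hmono y y2 ltac:(lra)).
  all: first [pose proof (Hmono y y0 L) | pose proof (Hmono y0 y ltac:(lra))]; lra.
Qed.

Lemma continuity_pt_const_right (g : R -> R) x c :
  continuity_pt g x -> (forall s, x < s -> g s = c) -> g x = c.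
Proof.
  intros Hg Hc. destruct (Req_dec (g x) c) as [E|E]; [exact E|exfalso].
  destruct (Hg (Rabs (g x - c))) as [d [Hd Hy]]; [apply Rabs_pos_lt; lra|].
  specialize (Hy (x + d / 2)). simpl in Hy. unfold R_dist, D_x, no_cond in Hy.
  assert (Hnear : Rabs (x + d / 2 - x) < d) by (rewrite Rabs_right; lra).
  assert (Hne : x <> x + d / 2) by (intro; lra).
  specialize (Hy (conj (conj I Hne) Hnear)).
  rewrite Hc, (Rabs_minus_sym c) in Hy by lra. lra.
Qed.

Lemma strictly_convex_on_sym (g : R -> R) lo hi x y t :
  strictly_convex_on g lo hi -> lo <= x <= hi -> lo <= y <= hi -> x <> y -> 0 < t < 1 ->
  g (t * x + (1 - t) * y) < t * g x + (1 - t) * g y.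
Proof.
  intros Hg Hx Hy Hxy Ht. destruct (Rlt_or_le x y) as [L|L].
  - apply Hg; lra.
  - replace (t * x + (1 - t) * y) with ((1 - t) * y + (1 - (1 - t)) * x) by ring.
    replace (t * g x + (1 - t) * g y) with ((1 - t) * g y + (1 - (1 - t)) * g x) by ring.
    apply Hg; lra.
Qed.

Lemma strictly_convex_tangent_below (g g' : R -> R) lo hi x m :
  strictly_convex_on g lo hi -> derivable_pt_lim g x (g' x) ->
  lo <= x <= hi -> lo <= m <= hi -> g x + g' x * (m - x) <= g m.
Proof.
  intros Hg Hd Hx Hm.
  destruct (Req_dec m x) as [->|Hmx]; [lra|].
  apply Rnot_lt_le. intro Hlt. set (gap := g x + g' x * (m - x) - g m).
  assert (Hdist : 0 < Rabs (m - x)) by (apply Rabs_pos_lt; lra).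
  destruct (Hd (gap / Rabs (m - x))) as [[d Hdpos] Hq].
  { apply Rdiv_lt_0_compat; unfold gap; lra. }
  simpl in Hq.
  set (t := Rmin (1 / 2) (d / (2 * Rabs (m - x)))).
  assert (Ht : 0 < t <= 1 / 2).
  { split; [apply Rmin_pos; [lra|apply Rdiv_lt_0_compat; lra] | apply Rmin_l]. }
  assert (Htd : t * Rabs (m - x) < d).
  { assert (t <= d / (2 * Rabs (m - x))) by apply Rmin_r.
    apply Rle_lt_trans with (d / (2 * Rabs (m - x)) * Rabs (m - x)); [nra|].
    replace (d / (2 * Rabs (m - x)) * Rabs (m - x)) with (d / 2) by (field; lra). lra. }
  set (h := t * (m - x)).
  assert (Hh : h <> 0) by (apply Rmult_integral_contrapositive; split; lra).
  assert (Habs : Rabs h < d) by (unfold h; rewrite Rabs_mult, Rabs_right by lra; exact Htd).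
  specialize (Hq h Hh Habs).
  set (q := (g (x + h) - g x) / h) in Hq.
  assert (Eq : g (x + h) - g x = t * (q * (m - x))) by (unfold q, h; field; split; lra).
  pose proof (strictly_convex_on_sym g lo hi m x t Hg Hm Hx Hmx ltac:(lra)) as Hc.
  replace (t * m + (1 - t) * x) with (x + h) in Hc by (unfold h; ring).
  assert (Hchord : q * (m - x) < g m - g x) by nra.
  assert (Hclose : Rabs ((q - g' x) * (m - x)) < gap).
  { rewrite Rabs_mult.
    replace gap with (gap / Rabs (m - x) * Rabs (m - x)) by (field; lra).
    apply Rmult_lt_compat_r; assumption. }
  apply Rabs_def2 in Hclose. unfold gap in Hclose. lra.
Qed.

Lemma strictly_convex_deriv_increasing (g g' : R -> R) lo hi x y :
  strictly_convex_on g lo hi -> (forall z, derivable_pt_lim g z (g' z)) ->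
  lo <= x -> x < y -> y <= hi -> g' x < g' y.
Proof.
  intros Hg Hd Hx Hxy Hy. set (m := (x + y) / 2).
  pose proof (strictly_convex_tangent_below g g' lo hi x m Hg (Hd x)
    ltac:(lra) ltac:(unfold m; lra)).
  pose proof (strictly_convex_tangent_below g g' lo hi y m Hg (Hd y)
    ltac:(lra) ltac:(unfold m; lra)).
  pose proof (Hg x y (1 / 2) Hx Hxy Hy ltac:(lra)) as Hmid.
  replace (1 / 2 * x + (1 - 1 / 2) * y) with m in Hmid by (unfold m; field).
  unfold m in *. nra.
Qed.

Section ShiftedFunction.

Variables (a alpha : R) (f f' : R -> R).
Hypothesis a_pos : 0 < a.
Hypothesis alpha_range : 0 <= alpha < 1.
Hypothesis f_deriv : forall x, derivable_pt_lim f x (f' x).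
Hypothesis f'_cont : continuity f'.
Hypothesis f_abs : forall s, a <= Rabs s -> f s = Rabs s.
Hypothesis f_convex : strictly_convex_on f (- a) a.

Local Notation F := (Falpha f alpha).
Local Notation xp := (xplus a f alpha).
Local Notation xm := (xminus a f alpha).
Local Notation Phi := (phi a f alpha).
Local Notation Tau := (tau a f alpha).
Local Notation sal := (salpha a f alpha).
Local Notation ual := (ualpha a f alpha).
Local Notation D y := (y + delta a f alpha y).

Lemma f'_right s : a < s -> f' s = 1.
Proof.
  intro Hs. apply (uniqueness_limite f s); [apply f_deriv|].
  apply (derivable_pt_lim_locally_ext id f s a (s + 1)); [lra| |apply derivable_pt_lim_id].
  intros z Hz. rewrite f_abs; rewrite Rabs_right; unfold id; lra.
Qed.

Lemma f'_left s : s < - a -> f' s = -1.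
Proof.
  intro Hs. apply (uniqueness_limite f s); [apply f_deriv|].
  apply (derivable_pt_lim_locally_ext (opp_fct id) f s (s - 1) (- a)); [lra| |].
  - intros z Hz. rewrite f_abs; rewrite Rabs_left; unfold opp_fct, id; lra.
  - apply derivable_pt_lim_opp, derivable_pt_lim_id.
Qed.

Lemma f'_a : f' a = 1.
Proof. exact (continuity_pt_const_right f' a 1 (f'_cont a) f'_right). Qed.

Lemma f'_increasing x y : - a <= x -> x < y -> y <= a -> f' x < f' y.
Proof. apply (strictly_convex_deriv_increasing f f' (- a) a x y f_convex f_deriv). Qed.

Lemma f'_lt_1 s : s < a -> f' s < 1.
Proof.
  intro Hs. destruct (Rlt_le_dec s (- a)) as [L|L].
  - rewrite f'_left; lra.
  - rewrite <- f'_a. apply f'_increasing; lra.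
Qed.

Lemma f'_le_1 s : f' s <= 1.
Proof.
  destruct (Rtotal_order s a) as [L|[->|L]].
  - left. now apply f'_lt_1.
  - rewrite f'_a; lra.
  - rewrite f'_right; lra.
Qed.

Lemma xplus_spec : - a <= xp < a /\ f' xp = alpha.
Proof.
  assert (Ex : exists x, - a <= x <= a /\ derivable_pt_lim f x alpha).
  { destruct (IVT_between f' (- a - 1) (a + 1) alpha f'_cont ltac:(lra))
      as [z [Hz Hfz]].
    { left. rewrite f'_left, f'_right; lra. }
    exists z. rewrite <- Hfz. split; [|apply f_deriv]. split.
    - apply Rnot_lt_le. intro L. rewrite f'_left in Hfz; lra.
    - apply Rnot_lt_le. intro L. rewrite f'_right in Hfz; lra. }
  destruct (the_real_spec _ Ex) as [Hx Hder]. fold xp in Hx, Hder.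
  pose proof (uniqueness_limite f xp _ _ (f_deriv xp) Hder) as E.
  split; [|exact E]. split; [lra|].
  destruct Hx as [_ [L|L]]; [exact L|]. rewrite L, f'_a in E. lra.
Qed.

Lemma f'_lt_alpha c : c < xp -> f' c < alpha.
Proof.
  intro Hc. destruct xplus_spec as [Hx E].
  destruct (Rlt_le_dec c (- a)) as [L|L].
  - rewrite f'_left; lra.
  - rewrite <- E. apply f'_increasing; lra.
Qed.

Lemma f'_gt_alpha c : xp < c -> alpha < f' c.
Proof.
  intro Hc. destruct xplus_spec as [Hx E].
  destruct (Rle_lt_dec c a) as [L|L].
  - rewrite <- E. apply f'_increasing; lra.
  - rewrite f'_right; lra.
Qed.

Lemma F_deriv x : derivable_pt_lim F x (f' x - alpha).
Proof.
  replace (f' x - alpha) with (f' x - alpha * 1) by ring.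
  apply (derivable_pt_lim_minus f (mult_real_fct alpha id)); [apply f_deriv|].
  apply derivable_pt_lim_scal, derivable_pt_lim_id.
Qed.

Lemma F_continuous : continuity F.
Proof. intro x. apply derivable_continuous_pt. exists (f' x - alpha). apply F_deriv. Qed.

Lemma F_mean_value y1 y2 : y1 < y2 ->
  exists c, F y2 - F y1 = (f' c - alpha) * (y2 - y1) /\ y1 < c < y2.
Proof. intro H. apply (MVT_cor2 F (fun c => f' c - alpha)); [exact H|intros; apply F_deriv]. Qed.

Lemma F_decreasing y1 y2 : y1 < y2 -> y2 <= xp -> F y2 < F y1.
Proof.
  intros H1 H2. destruct (F_mean_value y1 y2 H1) as [c [E Hc]].
  pose proof (f'_lt_alpha c ltac:(lra)). nra.
Qed.

Lemma F_increasing y1 y2 : xp <= y1 -> y1 < y2 -> F y1 < F y2.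
Proof.
  intros H1 H2. destruct (F_mean_value y1 y2 H2) as [c [E Hc]].
  pose proof (f'_gt_alpha c ltac:(lra)). nra.
Qed.

Lemma F_diff_le y1 y2 : y1 < y2 -> F y2 - F y1 <= (1 - alpha) * (y2 - y1).
Proof.
  intro H. destruct (F_mean_value y1 y2 H) as [c [E Hc]].
  pose proof (f'_le_1 c). nra.
Qed.

Lemma F_ge_min y : F xp <= F y.
Proof.
  destruct (Rtotal_order y xp) as [L|[->|L]].
  - left. apply F_decreasing; lra.
  - lra.
  - left. apply F_increasing; lra.
Qed.

Lemma f_gt_id s : s < a -> s < f s.
Proof.
  intro Hs.
  destruct (MVT_cor2 f f' s a Hs (fun c _ => f_deriv c)) as [c [E Hc]].
  pose proof (f'_lt_1 c ltac:(lra)).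
  rewrite f_abs, Rabs_right in E by (rewrite ?Rabs_right; lra). nra.
Qed.

Lemma F_right s : a <= s -> F s = (1 - alpha) * s.
Proof. intro Hs. unfold Falpha. rewrite f_abs, Rabs_right by (rewrite ?Rabs_right; lra). ring. Qed.

Lemma F_left s : s <= - a -> F s = - (1 + alpha) * s.
Proof. intro Hs. unfold Falpha. rewrite f_abs, Rabs_left1 by (rewrite ?Rabs_left1; lra). ring. Qed.

Lemma F_onto_right c : F xp <= c -> exists z, xp <= z /\ F z = c.
Proof.
  intro Hc. destruct xplus_spec as [Hx _].
  set (w := Rabs c / (1 - alpha)).
  assert (Ew : Rabs c = (1 - alpha) * w) by (unfold w; field; lra).
  pose proof (Rle_abs c). pose proof (Rabs_pos c).
  assert (0 <= w) by nra.
  set (M := a + w).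
  assert (EM : F M = (1 - alpha) * a + Rabs c)
    by (rewrite F_right by (unfold M; lra); unfold M; lra).
  destruct (IVT_between F xp M c F_continuous ltac:(unfold M; lra)) as [z [Hz E]].
  { left. split; [exact Hc|]. rewrite EM. nra. }
  exists z. split; [lra|exact E].
Qed.

Lemma F_onto_left c : F xp <= c -> exists y, y <= xp /\ F y = c.
Proof.
  intro Hc. destruct xplus_spec as [Hx _].
  set (M := a + Rabs c).
  pose proof (Rle_abs c). pose proof (Rabs_pos c).
  destruct (IVT_between F (- M) xp c F_continuous ltac:(unfold M; lra)) as [y [Hy E]].
  { right. split; [exact Hc|]. rewrite F_left by (unfold M; lra). unfold M. nra. }
  exists y. split; [lra|exact E].
Qed.

Lemma Phi_spec y : xp <= Phi y /\ F (Phi y) = F y.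
Proof. unfold phi, Finv. apply the_real_spec, F_onto_right, F_ge_min. Qed.

Lemma Phi_eq y z : xp <= z -> F y = F z -> Phi y = z.
Proof.
  intros Hz E. unfold phi, Finv. rewrite E.
  apply the_real_unique; [now split|]. intros w [Hw Ew].
  destruct (Rtotal_order w z) as [L|[L|L]]; [|exact L|].
  - pose proof (F_increasing w z Hw L). lra.
  - pose proof (F_increasing z w Hz L). lra.
Qed.

Lemma Phi_xp : Phi xp = xp.
Proof. apply Phi_eq; lra. Qed.

Lemma Phi_decreasing y1 y2 : y1 < y2 -> y2 <= xp -> Phi y2 < Phi y1.
Proof.
  intros H1 H2. pose proof (F_decreasing y1 y2 H1 H2).
  destruct (Phi_spec y1) as [A1 B1], (Phi_spec y2) as [A2 B2].
  apply Rnot_le_lt. intros [L|L].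
  - pose proof (F_increasing _ _ A1 L). lra.
  - rewrite L in B1. lra.
Qed.

Lemma Phi_onto z : xp <= z -> exists y, y <= xp /\ Phi y = z.
Proof.
  intro Hz. destruct (F_onto_left (F z) (F_ge_min z)) as [y [Hy E]].
  exists y. split; [exact Hy|]. now apply Phi_eq.
Qed.

(* Clamping at [xp] extends [Phi] by a constant, so the global IVT applies. *)
Lemma Phi_clamp_continuous : continuity (fun y => Phi (Rmin y xp)).
Proof.
  apply continuity_nonincreasing_onto with xp.
  - intros y1 y2 L. pose proof (Rmin_r y2 xp).
    destruct (Rle_lt_or_eq_dec (Rmin y1 xp) (Rmin y2 xp)) as [L'|L'].
    + apply Rle_min_compat_r, L.
    + left. now apply Phi_decreasing.
    + rewrite L'. lra.
  - intro y. exact (proj1 (Phi_spec _)).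
  - intros z Hz. destruct (Phi_onto z Hz) as [y [Hy E]].
    exists y. now rewrite Rmin_left.
Qed.

Lemma xminus_spec : xm < xp /\ Phi xm = a /\ F xm = F a.
Proof.
  destruct xplus_spec as [Hx _].
  assert (Ex : exists y, y < xp /\ Phi y = a).
  { destruct (F_onto_left (F a) (F_ge_min a)) as [y [[Hy|Hy] E]].
    - exists y. split; [exact Hy|]. apply Phi_eq; lra.
    - subst y. pose proof (F_increasing xp a ltac:(lra) ltac:(lra)). lra. }
  destruct (the_real_spec _ Ex) as [Hlt Ha]. fold xm in Hlt, Ha.
  split; [exact Hlt|]. split; [exact Ha|].
  destruct (Phi_spec xm) as [_ E]. congruence.
Qed.

Lemma Phi_lt_a y : xm < y -> y <= xp -> Phi y < a.
Proof.
  intros H1 H2. destruct xminus_spec as [_ [E _]].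
  pose proof (Phi_decreasing _ _ H1 H2). lra.
Qed.

Lemma D_increasing y1 y2 : y1 < y2 -> y2 <= xp -> D y1 < D y2.
Proof.
  intros H1 H2. pose proof (Phi_decreasing y1 y2 H1 H2) as Hphi.
  destruct (Phi_spec y1) as [_ B1], (Phi_spec y2) as [_ B2].
  pose proof (F_diff_le _ _ Hphi) as Hlip. rewrite B1, B2 in Hlip.
  unfold delta. set (w1 := F y1 / (1 - alpha)). set (w2 := F y2 / (1 - alpha)).
  assert (E1 : F y1 = (1 - alpha) * w1) by (unfold w1; field; lra).
  assert (E2 : F y2 = (1 - alpha) * w2) by (unfold w2; field; lra).
  nra.
Qed.

Lemma D_xm : D xm = xm.
Proof.
  destruct xminus_spec as [_ [E1 E2]]. unfold delta.
  rewrite E1, E2, F_right by lra. field. lra.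
Qed.

Lemma salpha_bounds : xp < sal < a.
Proof.
  destruct xplus_spec as [Hx _].
  pose proof (f_gt_id xp ltac:(lra)) as Hf.
  pose proof (F_increasing xp a ltac:(lra) ltac:(lra)) as HF. rewrite (F_right a) in HF by lra.
  assert (Es : sal = F xp / (1 - alpha)) by (unfold salpha, delta; rewrite Phi_xp; ring).
  assert (Ew : F xp = (1 - alpha) * sal) by (rewrite Es; field; lra).
  unfold Falpha in Ew, HF. split; nra.
Qed.

Lemma D_clamp_continuous : continuity (fun y => D (Rmin y xp)).
Proof.
  intro y. unfold delta.
  apply continuity_pt_plus; [apply continuity_Rmin_l|].
  apply (continuity_pt_minus (fun y => F (Rmin y xp) / (1 - alpha)));
    [|apply Phi_clamp_continuous].
  apply (continuity_pt_mult (fun y => F (Rmin y xp)) (fun _ => / (1 - alpha)));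
    [|apply continuity_pt_const; now intros ? ?].
  apply (continuity_pt_comp (fun y => Rmin y xp) F); [apply continuity_Rmin_l|apply F_continuous].
Qed.

Lemma D_onto x : xm <= x <= sal -> exists y, xm <= y <= xp /\ D y = x.
Proof.
  intros Hx. destruct xminus_spec as [Hm _].
  destruct (IVT_between (fun y => D (Rmin y xp)) xm xp x D_clamp_continuous ltac:(lra))
    as [y [Hy E]].
  { left. rewrite !Rmin_left by lra. rewrite D_xm. exact Hx. }
  exists y. split; [exact Hy|]. now rewrite Rmin_left in E by lra.
Qed.

Lemma Tau_D y : y <= xp -> Tau (D y) = y.
Proof.
  intro Hy. unfold tau. apply the_real_unique; [now split|].
  intros w [Hw E].
  destruct (Rtotal_order w y) as [L|[L|L]]; [|exact L|].
  - pose proof (D_increasing w y L Hy). lra.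
  - pose proof (D_increasing y w L Hw). lra.
Qed.

Lemma Tau_spec x : xm <= x <= sal -> xm <= Tau x <= xp /\ D (Tau x) = x.
Proof.
  intro Hx. destruct (D_onto x Hx) as [y [Hy <-]]. rewrite Tau_D by lra. now split.
Qed.

Lemma Tau_gt_xm x : xm < x <= sal -> xm < Tau x.
Proof.
  intro Hx. destruct (Tau_spec x ltac:(lra)) as [[[L|L] _] E]; [exact L|].
  rewrite <- L, D_xm in E. lra.
Qed.

Lemma Tau_increasing x1 x2 : xm <= x1 -> x1 < x2 -> x2 <= sal -> Tau x1 < Tau x2.
Proof.
  intros H1 H2 H3.
  destruct (Tau_spec x1 ltac:(lra)) as [[_ B1] E1], (Tau_spec x2 ltac:(lra)) as [_ E2].
  apply Rnot_le_lt. intros [L|L].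
  - pose proof (D_increasing _ _ L B1). lra.
  - rewrite L in E2. lra.
Qed.

Lemma PhiTau_decreasing x1 x2 : xm <= x1 -> x1 < x2 -> x2 <= sal ->
  Phi (Tau x2) < Phi (Tau x1).
Proof.
  intros H1 H2 H3. apply Phi_decreasing; [now apply Tau_increasing|].
  exact (proj2 (proj1 (Tau_spec x2 ltac:(lra)))).
Qed.

Lemma Tau_lt x : xm < x <= sal -> Tau x < x.
Proof.
  intro Hx. pose proof (Tau_gt_xm x Hx).
  destruct (Tau_spec x ltac:(lra)) as [[_ B] E].
  destruct (Phi_spec (Tau x)) as [_ EF].
  pose proof (f_gt_id _ (Phi_lt_a (Tau x) H B)) as Hlt.
  unfold delta in E. rewrite <- EF in E.
  set (w := F (Phi (Tau x)) / (1 - alpha)) in E.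
  assert (Ew : F (Phi (Tau x)) = (1 - alpha) * w) by (unfold w; field; lra).
  unfold Falpha in Ew. nra.
Qed.

Lemma PhiTau_fixed_point_exists : exists u, xm < u < sal /\ Phi (Tau u) = u.
Proof.
  destruct xminus_spec as [Hm [Pm _]]. pose proof salpha_bounds as Hs.
  destruct (IVT_between (fun y => D (Rmin y xp) - Phi (Rmin y xp)) xm xp 0
    (continuity_minus _ _ D_clamp_continuous Phi_clamp_continuous) ltac:(lra))
    as [y [Hy E]].
  { left. rewrite !Rmin_left by lra. rewrite D_xm, Pm, Phi_xp. unfold salpha in Hs. lra. }
  rewrite Rmin_left in E by lra.
  assert (Hy' : xm < y < xp).
  { split; destruct Hy as [[L|L] [L'|L']]; try lra; subst y.
    - rewrite D_xm, Pm in E. lra.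
    - rewrite Phi_xp in E. unfold salpha in Hs. lra. }
  exists (D y). split; [split|].
  - rewrite <- D_xm at 1. apply D_increasing; lra.
  - apply D_increasing; lra.
  - rewrite Tau_D by lra. lra.
Qed.

Lemma ualpha_spec : xm < ual < sal /\ Phi (Tau ual) = ual.
Proof.
  destruct PhiTau_fixed_point_exists as [u Hu].
  unfold ualpha. rewrite (the_real_unique _ u Hu); [exact Hu|].
  intros v [Hv Ev]. destruct Hu as [Hu Eu].
  destruct (Rtotal_order v u) as [L|[L|L]]; [|exact L|].
  - pose proof (PhiTau_decreasing v u ltac:(lra) L ltac:(lra)). lra.
  - pose proof (PhiTau_decreasing u v ltac:(lra) L ltac:(lra)). lra.
Qed.

Lemma Sh_le x : x <= sal -> Sh a f alpha x = alpha * x + F (Tau x).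
Proof. intro Hx. unfold Sh. destruct (Rle_dec x sal); [reflexivity|lra]. Qed.

Lemma Sh_gt x : sal < x -> Sh a f alpha x = x.
Proof. intro Hx. unfold Sh. destruct (Rle_dec x sal); [lra|reflexivity]. Qed.

Lemma Sh_minus_f x : x <= sal -> Sh a f alpha x - f x = F (Phi (Tau x)) - F x.
Proof. intro Hx. rewrite Sh_le, (proj2 (Phi_spec _)) by exact Hx. unfold Falpha. ring. Qed.

Lemma Sh_lt_f_right_of_ualpha x : ual < x < a -> Sh a f alpha x < f x.
Proof.
  intro Hx. destruct ualpha_spec as [Hu Eu].
  destruct (Rle_lt_dec x sal) as [L|L].
  - pose proof (PhiTau_decreasing ual x ltac:(lra) ltac:(lra) L) as Hz. rewrite Eu in Hz.
    pose proof (F_increasing _ x (proj1 (Phi_spec (Tau x))) ltac:(lra)).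
    pose proof (Sh_minus_f x L). lra.
  - rewrite Sh_gt by exact L. apply f_gt_id. lra.
Qed.

Lemma f_lt_Sh_left_of_ualpha x : xm < x < ual -> f x < Sh a f alpha x.
Proof.
  intro Hx. destruct ualpha_spec as [Hu Eu].
  pose proof (PhiTau_decreasing x ual ltac:(lra) ltac:(lra) ltac:(lra)) as Hz.
  rewrite Eu in Hz. pose proof (Sh_minus_f x ltac:(lra)) as E.
  destruct (Rle_lt_dec xp x) as [L|L].
  - pose proof (F_increasing x (Phi (Tau x)) L ltac:(lra)). lra.
  - pose proof (F_decreasing _ _ (Tau_lt x ltac:(lra)) (Rlt_le _ _ L)) as HF.
    rewrite <- (proj2 (Phi_spec (Tau x))) in HF. lra.
Qed.

Lemma Sh_ualpha : Sh a f alpha ual = f ual.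
Proof.
  destruct ualpha_spec as [Hu Eu].
  pose proof (Sh_minus_f ual ltac:(lra)) as E. rewrite Eu in E. lra.
Qed.

Lemma Sh_lt_f_iff x : xm < x < a -> (Sh a f alpha x < f x <-> ual < x < a).
Proof.
  intro Hx. split; [|apply Sh_lt_f_right_of_ualpha].
  intro L. split; [|lra]. destruct (Rtotal_order ual x) as [T|[<-|T]]; [exact T| |].
  - rewrite Sh_ualpha in L. lra.
  - pose proof (f_lt_Sh_left_of_ualpha x ltac:(lra)). lra.
Qed.

Lemma Sh_eq_f_eq_ualpha x : xm < x < a -> Sh a f alpha x = f x -> x = ual.
Proof.
  intros Hx E. destruct (Rtotal_order ual x) as [T|[T|T]]; [| now symmetry |].
  - pose proof (Sh_lt_f_right_of_ualpha x ltac:(lra)). lra.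
  - pose proof (f_lt_Sh_left_of_ualpha x ltac:(lra)). lra.
Qed.

End ShiftedFunction.

Theorem proposition3p28 (a alpha : R) (f : R -> R) :
  0 < a -> 0 <= alpha < 1 -> Ca a f ->
  (forall x, xminus a f alpha < x < a ->
     (Sh a f alpha x < f x <-> ualpha a f alpha < x < a)) /\
  (xminus a f alpha < ualpha a f alpha < a /\
   Sh a f alpha (ualpha a f alpha) = f (ualpha a f alpha) /\
   forall x, xminus a f alpha < x < a -> Sh a f alpha x = f x ->
     x = ualpha a f alpha).
Proof.
  intros Ha Hal [[f' [Hd Hc]] [_ [Habs Hconv]]].
  destruct (ualpha_spec a alpha f f' Ha Hal Hd Hc Habs Hconv) as [Hu _].
  pose proof (salpha_bounds a alpha f f' Ha Hal Hd Hc Habs Hconv).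
  split; [exact (Sh_lt_f_iff a alpha f f' Ha Hal Hd Hc Habs Hconv)|].
  split; [lra|]. split.
  - exact (Sh_ualpha a alpha f f' Ha Hal Hd Hc Habs Hconv).
  - exact (Sh_eq_f_eq_ualpha a alpha f f' Ha Hal Hd Hc Habs Hconv).
Qed.
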